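(* Let $0<\varepsilon<\tfrac13$, put $\delta=\dfrac{1+\varepsilon}{((1+\varepsilon)L)^{1/\varepsilon}}$, and run $\textsc{Approx}(\varepsilon,\delta)$. Then the following hold. (i) The number of iterations satisfies $\tau\le m\left\lceil\log_{1+\varepsilon}\frac{1+\varepsilon}{\delta}\right\rceil$. (ii) The scaled flow $x_\tau/\log_{1+\varepsilon}\frac{1+\varepsilon}{\delta}$ is a feasible $L$-bounded flow. (iii) The value of this scaled flow is at least $\beta/(1+3\varepsilon)$.
   Context: Let $G=(V,E)$ be a finite directed graph with $m=|E|$, capacities $c:E\to\mathbb{R}_{>0}$, distinct vertices $s,t\in V$, and a positive integer $L$. Let $\mathcal{P}_L$ be the set of directed simple $s$-$t$ paths with at most $L$ edges, and assume $\mathcal{P}_L\neq\emptyset$. An $L$-bounded flow is a function $x:\mathcal{P}_L\to\mathbb{R}_{\ge0}$, with value $\sum_{P}x(P)$. It is feasible if $\sum_{P\ni e}x(P)\le c(e)$ for all $e\in E$. For $y:E\to\mathbb{R}_{\ge0}$ write $y(P)=\sum_{e\in P}y(e)$ and $d^L_y(s,t)=\min_{P\in\mathcal{P}_L}y(P)$. Let $\beta$ be the optimal value of the LP $\min\{\sum_{e\in E}c(e)y(e): y\ge 0,\ y(P)\ge1\ \forall P\in\mathcal{P}_L\}$; by LP duality, $\beta$ equals the maximum value of a feasible $L$-bounded flow. Logarithms without base are natural. Algorithm $\textsc{Approx}(\varepsilon,\delta)$ (parameters $\varepsilon>0,\delta>0$): - Initialize $i=0$, $y_0(e)=\delta$ for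 all $e$, and $x_0\equiv0$. Let $\alpha^L(i)=d^L_{y_i}(s,t)$. - While $\alpha^L(i)<1$: - set $i\leftarrow i+1$; - choose $P_i\in\mathcal{P}_L$ minimizing $y_{i-1}(P)$, with ties broken arbitrarily; - let $c_i=\min_{e\in P_i}c(e)$; - set $x_i=x_{i-1}$ except $x_i(P_i)=x_{i-1}(P_i)+c_i$; - set $y_i(e)=y_{i-1}(e)(1+\varepsilon c_i/c(e))$ for $e\in P_i$, and $y_i(e)=y_{i-1}(e)$ otherwise. - Return $x_i$. $\tau$ denotes the number of iterations performed, and $f_i=\sum_{P}x_i(P)$. *)

From Stdlib Require Import Reals List.
Import ListNotations.
Open Scope R_scope.

(* Graph: edges are 0..m-1, edge e goes from vertex (tl e) to vertex (hd e);
   vertices are natural numbers.  Paths are lists of edges. *)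

Fixpoint is_walk (m : nat) (tl hd : nat -> nat) (u t : nat) (p : list nat) : Prop :=
  match p with
  | nil => u = t
  | e :: p' => (e < m)%nat /\ tl e = u /\ is_walk m tl hd (hd e) t p'
  end.

Definition is_Lpath (m : nat) (tl hd : nat -> nat) (s t L : nat) (p : list nat) : Prop :=
  is_walk m tl hd s t p /\ NoDup (s :: map hd p) /\ (length p <= L)%nat.

Fixpoint path_len (y : nat -> R) (p : list nat) : R :=
  match p with
  | nil => 0
  | e :: p' => y e + path_len y p'
  end.

Definition is_dL (m : nat) (tl hd : nat -> nat) (s t L : nat) (y : nat -> R) (d : R) : Prop :=
  (exists P, is_Lpath m tl hd s t L P /\ path_len y P = d) /\
  (forall Q, is_Lpath m tl hd s t L Q -> d <= path_len y Q).

Fixpoint sum_nat (n : nat) (f : nat -> R) : R :=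
  match n with
  | O => 0
  | S n' => sum_nat n' f + f n'
  end.

Definition LP_feasible (m : nat) (tl hd : nat -> nat) (s t L : nat) (y : nat -> R) : Prop :=
  (forall e, (e < m)%nat -> 0 <= y e) /\
  (forall P, is_Lpath m tl hd s t L P -> 1 <= path_len y P).

Definition LP_cost (m : nat) (c : nat -> R) (y : nat -> R) : R :=
  sum_nat m (fun e => c e * y e).

Definition LP_opt (m : nat) (tl hd : nat -> nat) (c : nat -> R) (s t L : nat) (beta : R) : Prop :=
  (exists y, LP_feasible m tl hd s t L y /\ LP_cost m c y = beta) /\
  (forall y, LP_feasible m tl hd s t L y -> beta <= LP_cost m c y).

Definition is_min_cap (c : nat -> R) (P : list nat) (c0 : R) : Prop :=
  (exists e, In e P /\ c e = c0) /\ (forall e, In e P -> c0 <= c e).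

(* An L-bounded flow is represented as a finite list of (path, amount) pairs;
   x(P) is the sum of the amounts recorded for P (0 if P does not occur). *)
Definition flow := list (list nat * R).

Definition flow_value (x : flow) : R :=
  fold_right (fun pa acc => snd pa + acc) 0 x.

Definition edge_load (x : flow) (e : nat) : R :=
  fold_right (fun pa acc =>
     (if in_dec Nat.eq_dec e (fst pa) then snd pa else 0) + acc) 0 x.

Definition scale_flow (x : flow) (k : R) : flow :=
  map (fun pa => (fst pa, snd pa / k)) x.

Definition feasible_Lflow (m : nat) (tl hd : nat -> nat) (c : nat -> R) (s t L : nat)
    (x : flow) : Prop :=
  (forall pa, In pa x -> is_Lpath m tl hd s t L (fst pa) /\ 0 <= snd pa) /\
  (forall e, (e < m)%nat -> edge_load x e <= c e).

Definition logb (b z : R) : R := ln z / ln b.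

Definition Rceil (x : R) : Z := (1 - up (- x))%Z.

From Stdlib Require Import Reals List Lra Lia.
(* Imported after Reals, whose own [sum_nat] it must shadow. *)
Import ListNotations.
Open Scope R_scope.

(* Along a run we maintain, for every i <= tau, four invariants:
   - every length y_i(e) lies in [delta, 1+eps): lengths only grow, and an
     edge grows (by a factor at most 1+eps) only when it lies on a path of
     y-length < 1;
   - routing c_i units over e multiplies y(e) by 1 + eps*c_i/c(e), which by
     concavity of ln is at least (1+eps)^(c_i/c(e)); hence
     ln(1+eps) * load_i(e) / c(e) <= ln y_i(e) - ln delta;
   - the bottleneck edge of each augmenting path grows by the factor 1+eps,
     so the potential sum_e ln y_i(e) gains ln(1+eps) per iteration;
   - the dual potential D_i = L*delta*beta + sum_e c(e)(y_i(e) - delta)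
     satisfies D_i <= L*delta*beta * exp(eps*f_i/beta), because weak LP
     duality bounds beta * d^L_{y_i}(s,t) by D_i.
   After general facts on finite sums, path lengths, flows, logarithms and
   weak LP duality, the invariants are proved by induction on i; the choice
   of delta gives ln((1+eps)/delta) = ln((1+eps)L)/eps, and claims (i), (ii)
   and (iii) follow by real arithmetic from the invariants at i = tau. *)

Lemma walk_edges_lt m tl hd u t p :
  is_walk m tl hd u t p -> forall e, In e p -> (e < m)%nat.
Proof.
  revert u; induction p as [|a p IH]; simpl; intros u Hw e He; [contradiction|].
  destruct Hw as [Ha [_ Hw]]. destruct He as [<-|He]; [exact Ha|exact (IH _ Hw e He)].
Qed.

Lemma Lpath_edges_lt m tl hd s t L p :
  is_Lpath m tl hd s t L p -> forall e, In e p -> (e < m)%nat.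
Proof. intros [Hw _]; exact (walk_edges_lt _ _ _ _ _ _ Hw). Qed.

Lemma Lpath_nodup m tl hd s t L p : is_Lpath m tl hd s t L p -> NoDup p.
Proof.
  intros [_ [Hnd _]]. apply NoDup_cons_iff in Hnd as [_ Hnd].
  exact (NoDup_map_inv _ _ Hnd).
Qed.

Lemma sum_nat_ext n (f g : nat -> R) :
  (forall e, (e < n)%nat -> f e = g e) -> sum_nat n f = sum_nat n g.
Proof.
  induction n as [|n IH]; simpl; intros H; [reflexivity|].
  rewrite IH by (intros; apply H; lia). rewrite (H n) by lia. reflexivity.
Qed.

Lemma sum_nat_plus n (f g : nat -> R) :
  sum_nat n (fun e => f e + g e) = sum_nat n f + sum_nat n g.
Proof. induction n as [|n IH]; simpl; [lra|]. rewrite IH; lra. Qed.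

Lemma sum_nat_scal n k (f : nat -> R) :
  sum_nat n (fun e => k * f e) = k * sum_nat n f.
Proof. induction n as [|n IH]; simpl; [lra|]. rewrite IH; lra. Qed.

Lemma sum_nat_const n k : sum_nat n (fun _ => k) = INR n * k.
Proof. induction n as [|n IH]; simpl sum_nat; [simpl; lra|]. rewrite IH, S_INR; lra. Qed.

Lemma sum_nat_le n (f g : nat -> R) :
  (forall e, (e < n)%nat -> f e <= g e) -> sum_nat n f <= sum_nat n g.
Proof.
  induction n as [|n IH]; simpl; intros H; [lra|].
  pose proof (H n ltac:(lia)). pose proof (IH ltac:(intros; apply H; lia)). lra.
Qed.

Lemma sum_nat_le_gain n (f g : nat -> R) e0 k :
  (forall e, (e < n)%nat -> f e <= g e) -> (e0 < n)%nat -> f e0 + k <= g e0 ->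
  sum_nat n f + k <= sum_nat n g.
Proof.
  induction n as [|n IH]; simpl; intros H He0 Hk; [lia|].
  destruct (Nat.eq_dec e0 n) as [->|Hne].
  - pose proof (sum_nat_le n f g ltac:(intros; apply H; lia)). lra.
  - pose proof (IH ltac:(intros; apply H; lia) ltac:(lia) Hk).
    pose proof (H n ltac:(lia)). lra.
Qed.

Lemma sum_nat_single n a (h : nat -> R) :
  (a < n)%nat -> sum_nat n (fun e => if Nat.eq_dec e a then h e else 0) = h a.
Proof.
  induction n as [|n IH]; simpl; intros Ha; [lia|].
  destruct (Nat.eq_dec n a) as [->|Hne].
  - rewrite (sum_nat_ext _ _ (fun _ => 0)), sum_nat_const; [lra|].
    intros e He. destruct (Nat.eq_dec e a); [lia|reflexivity].
  - rewrite IH by lia. lra.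
Qed.

Lemma sum_nat_on_path m (h : nat -> R) P :
  NoDup P -> (forall e, In e P -> (e < m)%nat) ->
  sum_nat m (fun e => if in_dec Nat.eq_dec e P then h e else 0) = path_len h P.
Proof.
  induction P as [|a P IH]; intros Hnd Hlt; cbn [path_len].
  - rewrite (sum_nat_ext _ _ (fun _ => 0)), sum_nat_const; [lra|].
    intros e _. destruct in_dec as [[]|]; reflexivity.
  - apply NoDup_cons_iff in Hnd as [Ha Hnd].
    rewrite (sum_nat_ext _ _ (fun e => (if Nat.eq_dec e a then h e else 0) +
               (if in_dec Nat.eq_dec e P then h e else 0))).
    + rewrite sum_nat_plus, sum_nat_single, IH; simpl in Hlt; auto.
    + intros e _. destruct (Nat.eq_dec e a) as [->|Hne].
      * destruct (in_dec Nat.eq_dec a (a :: P)) as [_|Hn]; [|simpl in Hn; tauto].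
        destruct (in_dec Nat.eq_dec a P); [contradiction|lra].
      * destruct (in_dec Nat.eq_dec e (a :: P)) as [Hi|Hi];
          destruct (in_dec Nat.eq_dec e P) as [Hj|Hj]; simpl in Hi; try lra.
        -- destruct Hi as [Hi|Hi]; [congruence|contradiction].
        -- exfalso; tauto.
Qed.

Lemma path_len_div k (y : nat -> R) P :
  path_len (fun e => y e / k) P = path_len y P / k.
Proof. induction P as [|a P IH]; simpl; [unfold Rdiv; lra|]. rewrite IH; unfold Rdiv; lra. Qed.

Lemma path_len_scal k (y : nat -> R) P :
  path_len (fun e => k * y e) P = k * path_len y P.
Proof. induction P as [|a P IH]; simpl; [lra|]. rewrite IH; lra. Qed.

Lemma path_len_shift k (y : nat -> R) P :
  path_len (fun e => y e - k) P = path_len y P - k * INR (length P).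
Proof.
  induction P as [|a P IH]; simpl length; simpl path_len; [simpl; lra|].
  rewrite IH, S_INR; lra.
Qed.

Lemma path_len_nonneg (y : nat -> R) P :
  (forall e, In e P -> 0 <= y e) -> 0 <= path_len y P.
Proof.
  induction P as [|a P IH]; simpl; intros H; [lra|].
  pose proof (H a (or_introl eq_refl)). pose proof (IH ltac:(auto)). lra.
Qed.

Lemma path_len_ge_edge (y : nat -> R) P e :
  In e P -> (forall e, In e P -> 0 <= y e) -> y e <= path_len y P.
Proof.
  induction P as [|a P IH]; simpl; intros He H; [contradiction|].
  destruct He as [<-|He].
  - pose proof (path_len_nonneg y P ltac:(auto)). lra.
  - pose proof (H a (or_introl eq_refl)). pose proof (IH He ltac:(auto)). lra.
Qed.

Lemma flow_value_app1 x pa : flow_value (x ++ [pa]) = flow_value x + snd pa.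
Proof. induction x as [|b x IH]; unfold flow_value in *; simpl; [lra|]. rewrite IH; lra. Qed.

Lemma flow_value_nonneg x : (forall pa, In pa x -> 0 <= snd pa) -> 0 <= flow_value x.
Proof.
  induction x as [|b x IH]; unfold flow_value in *; simpl; intros H; [lra|].
  pose proof (H b (or_introl eq_refl)). pose proof (IH ltac:(auto)). lra.
Qed.

Lemma edge_load_app1 x pa e :
  edge_load (x ++ [pa]) e =
  edge_load x e + (if in_dec Nat.eq_dec e (fst pa) then snd pa else 0).
Proof. induction x as [|b x IH]; unfold edge_load in *; simpl; [lra|]. rewrite IH; lra. Qed.

Lemma flow_value_scale x k : flow_value (scale_flow x k) = flow_value x / k.
Proof.
  induction x as [|b x IH]; unfold flow_value, scale_flow in *; simpl; unfold Rdiv in *; [lra|].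
  rewrite IH; lra.
Qed.

Lemma edge_load_scale x k e : edge_load (scale_flow x k) e = edge_load x e / k.
Proof.
  induction x as [|b x IH]; unfold edge_load, scale_flow in *; simpl; unfold Rdiv in *; [lra|].
  rewrite IH. destruct in_dec; lra.
Qed.

Lemma in_scale_flow x k pa :
  In pa (scale_flow x k) -> exists pb, In pb x /\ pa = (fst pb, snd pb / k).
Proof. unfold scale_flow; intros H. apply in_map_iff in H as [pb [<- H]]. eauto. Qed.

Lemma ln_le_mono x y : 0 < x -> x <= y -> ln x <= ln y.
Proof. intros Hx [Hxy|<-]; [left; apply ln_increasing|]; lra. Qed.

Lemma ln_pos_gt1 x : 1 < x -> 0 < ln x.
Proof. intros Hx. rewrite <- ln_1. apply ln_increasing; lra. Qed.

Lemma ln_le_sub1 x : 0 < x -> ln x <= x - 1.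
Proof. intros Hx. pose proof (exp_ineq1_le (ln x)) as H. rewrite exp_ln in H; lra. Qed.

Lemma ln_div x y : 0 < x -> 0 < y -> ln (x / y) = ln x - ln y.
Proof.
  intros Hx Hy. unfold Rdiv. rewrite ln_mult, ln_Rinv by (try apply Rinv_0_lt_compat; lra).
  ring.
Qed.

(* ln(1+eps) >= eps/(1+eps), from ln(1/(1+eps)) <= 1/(1+eps) - 1. *)
Lemma ln_1_plus_lower eps : 0 < eps -> eps / (1 + eps) <= ln (1 + eps).
Proof.
  intros He. pose proof (ln_le_sub1 (/ (1 + eps)) ltac:(apply Rinv_0_lt_compat; lra)) as H.
  rewrite ln_Rinv in H by lra.
  replace (eps / (1 + eps)) with (1 - / (1 + eps)) by (field; lra). lra.
Qed.

(* Concavity of ln: ln(1 + eps*a) >= a*ln(1+eps) for 0 <= a <= 1, obtained by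
   combining the tangent bound ln z <= z - 1 at the two points (1+eps)/M and
   1/M, where M = 1 + eps*a, with weights a and 1-a. *)
Lemma ln_concave_bound eps a :
  0 < eps -> 0 <= a <= 1 -> a * ln (1 + eps) <= ln (1 + eps * a).
Proof.
  intros He Ha. set (M := 1 + eps * a).
  assert (HM : 0 < M) by (unfold M; nra).
  pose proof (ln_le_sub1 ((1 + eps) / M) ltac:(apply Rdiv_lt_0_compat; lra)) as H1.
  pose proof (ln_le_sub1 (/ M) ltac:(apply Rinv_0_lt_compat; lra)) as H2.
  unfold Rdiv in H1. rewrite ln_mult in H1 by (try apply Rinv_0_lt_compat; lra).
  rewrite ln_Rinv in H1, H2 by lra.
  assert (E : a * ((1 + eps) * / M - 1) + (1 - a) * (/ M - 1) = 0).
  { unfold M; field; unfold M in HM; lra. }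
  nra.
Qed.

Lemma Rceil_ge x : x <= IZR (Rceil x).
Proof.
  unfold Rceil. rewrite minus_IZR. destruct (archimed (- x)) as [_ H]. simpl IZR. lra.
Qed.

Lemma LP_cost_nonneg m (c y : nat -> R) :
  (forall e, (e < m)%nat -> 0 < c e) -> (forall e, (e < m)%nat -> 0 <= y e) ->
  0 <= LP_cost m c y.
Proof.
  intros Hc Hy. unfold LP_cost.
  pose proof (sum_nat_le m (fun _ => 0) (fun e => c e * y e)) as H.
  rewrite sum_nat_const, Rmult_0_r in H. apply H.
  intros e He. apply Rmult_le_pos; [left|]; auto.
Qed.

Lemma LP_opt_nonneg m tl hd c s t L beta :
  (forall e, (e < m)%nat -> 0 < c e) -> LP_opt m tl hd c s t L beta -> 0 <= beta.
Proof. intros Hc [[y [[Hy _] <-]] _]. apply LP_cost_nonneg; auto. Qed.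

(* Weak LP duality for the L-bounded path cover: if every path in P_L has
   y-length at least g > 0, then y/g is LP-feasible, so beta*g <= cost(y). *)
Lemma LP_weak_duality m tl hd c s t L beta (y : nat -> R) g :
  LP_opt m tl hd c s t L beta -> 0 < g -> (forall e, (e < m)%nat -> 0 <= y e) ->
  (forall Q, is_Lpath m tl hd s t L Q -> g <= path_len y Q) ->
  beta * g <= LP_cost m c y.
Proof.
  intros [_ Hopt] Hg Hy HQ.
  assert (Hfeas : LP_feasible m tl hd s t L (fun e => y e / g)).
  { split.
    - intros e He. unfold Rdiv. apply Rmult_le_pos; [auto|left; apply Rinv_0_lt_compat; lra].
    - intros P HP. rewrite path_len_div. specialize (HQ P HP).
      apply (Rmult_le_reg_r g); [lra|]. unfold Rdiv. rewrite Rmult_assoc, Rinv_l; lra. }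
  specialize (Hopt _ Hfeas). unfold LP_cost in *.
  rewrite (sum_nat_ext _ _ (fun e => / g * (c e * y e))), sum_nat_scal in Hopt
    by (intros; unfold Rdiv; ring).
  apply (Rmult_le_compat_r g) in Hopt; [|lra].
  replace (/ g * sum_nat m (fun e => c e * y e) * g) with (sum_nat m (fun e => c e * y e))
    in Hopt by (field; lra). exact Hopt.
Qed.

(* Dual bound used both in the potential argument and at termination: if
   y >= delta on all edges and every path in P_L has y-length at least g,
   then g*beta <= L*delta*beta + cost(y - delta), since a path in P_L has at
   most L edges and so (y - delta)-length at least g - L*delta. *)
Lemma dual_bound m tl hd c s t L beta (y : nat -> R) delta g :
  (forall e, (e < m)%nat -> 0 < c e) -> LP_opt m tl hd c s t L beta -> 0 < beta ->
  0 <= delta -> (forall e, (e < m)%nat -> delta <= y e) ->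
  (forall Q, is_Lpath m tl hd s t L Q -> g <= path_len y Q) ->
  g * beta <= INR L * delta * beta + LP_cost m c (fun e => y e - delta).
Proof.
  intros Hc Hopt Hb Hd Hy HQ.
  assert (Hnn : 0 <= LP_cost m c (fun e => y e - delta)).
  { apply LP_cost_nonneg; auto. intros e He; specialize (Hy e He); lra. }
  destruct (Rle_dec (g - INR L * delta) 0) as [Hle|Hgt]; [nra|].
  assert (Hshift : forall Q, is_Lpath m tl hd s t L Q ->
            g - INR L * delta <= path_len (fun e => y e - delta) Q).
  { intros Q HQl. rewrite path_len_shift. specialize (HQ Q HQl).
    destruct HQl as [_ [_ Hlen]]. apply le_INR in Hlen.
    nra. }
  pose proof (LP_weak_duality m tl hd c s t L beta (fun e => y e - delta) (g - INR L * delta)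
                Hopt ltac:(lra) ltac:(intros e He; specialize (Hy e He); lra) Hshift).
  nra.
Qed.

Section ApproxRun.

Context {m : nat} {tl hd : nat -> nat} {c : nat -> R} {s t L : nat} {eps delta : R}.
Context {ys : nat -> nat -> R} {Ps : nat -> list nat} {cs : nat -> R} {xs : nat -> flow}.
Context {tau : nat}.

Hypothesis cap_pos : forall e, (e < m)%nat -> 0 < c e.
Hypothesis eps_pos : 0 < eps.
Hypothesis delta_range : 0 < delta < 1 + eps.
Hypothesis ys_init : forall e, (e < m)%nat -> ys O e = delta.
Hypothesis xs_init : xs O = nil.

Definition approx_step (i : nat) : Prop :=
  (exists a, is_dL m tl hd s t L (ys i) a /\ a < 1) /\
  is_Lpath m tl hd s t L (Ps (S i)) /\
  (forall Q, is_Lpath m tl hd s t L Q ->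
     path_len (ys i) (Ps (S i)) <= path_len (ys i) Q) /\
  is_min_cap c (Ps (S i)) (cs (S i)) /\
  xs (S i) = xs i ++ [(Ps (S i), cs (S i))] /\
  (forall e, (e < m)%nat ->
     ys (S i) e = if in_dec Nat.eq_dec e (Ps (S i))
                  then ys i e * (1 + eps * cs (S i) / c e)
                  else ys i e).

Hypothesis run : forall i, (i < tau)%nat -> approx_step i.

Lemma step_path i : (i < tau)%nat -> is_Lpath m tl hd s t L (Ps (S i)).
Proof. intros Hi. apply (run i Hi). Qed.

Lemma step_shortest i :
  (i < tau)%nat ->
  path_len (ys i) (Ps (S i)) < 1 /\
  (forall Q, is_Lpath m tl hd s t L Q -> path_len (ys i) (Ps (S i)) <= path_len (ys i) Q).
Proof.
  intros Hi. destruct (run i Hi) as [[a [[[P0 [HP0 <-]] _] Ha]] [_ [Hmin _]]].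
  split; [specialize (Hmin P0 HP0); lra|exact Hmin].
Qed.

Lemma step_bottleneck i :
  (i < tau)%nat -> exists e0, In e0 (Ps (S i)) /\ c e0 = cs (S i).
Proof. intros Hi. destruct (run i Hi) as [_ [_ [_ [[He0 _] _]]]]. exact He0. Qed.

Lemma step_amount_pos i : (i < tau)%nat -> 0 < cs (S i).
Proof.
  intros Hi. destruct (step_bottleneck i Hi) as [e0 [He0 <-]].
  apply cap_pos, (Lpath_edges_lt _ _ _ _ _ _ _ (step_path i Hi) e0 He0).
Qed.

Lemma step_ratio i e :
  (i < tau)%nat -> In e (Ps (S i)) -> 0 < cs (S i) / c e <= 1.
Proof.
  intros Hi He. destruct (run i Hi) as [_ [HP [_ [[[e0 [He0 <-]] Hcap] _]]]].
  pose proof (cap_pos e (Lpath_edges_lt _ _ _ _ _ _ _ HP e He)).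
  pose proof (cap_pos e0 (Lpath_edges_lt _ _ _ _ _ _ _ HP e0 He0)).
  pose proof (Hcap e He). split.
  - apply Rdiv_lt_0_compat; lra.
  - apply (Rmult_le_reg_r (c e)); [lra|]. unfold Rdiv. rewrite Rmult_assoc, Rinv_l; lra.
Qed.

Lemma step_flow i : (i < tau)%nat -> xs (S i) = xs i ++ [(Ps (S i), cs (S i))].
Proof. intros Hi. apply (run i Hi). Qed.

Lemma step_update i e :
  (i < tau)%nat -> (e < m)%nat ->
  ys (S i) e = if in_dec Nat.eq_dec e (Ps (S i))
               then ys i e * (1 + eps * (cs (S i) / c e)) else ys i e.
Proof.
  intros Hi He. destruct (run i Hi) as [_ [_ [_ [_ [_ Hupd]]]]].
  rewrite Hupd by exact He. unfold Rdiv. rewrite Rmult_assoc. reflexivity.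
Qed.

Lemma step_growth i e :
  (i < tau)%nat -> (e < m)%nat -> 0 <= ys i e ->
  ys i e <= ys (S i) e <= ys i e * (1 + eps).
Proof.
  intros Hi He Hy. rewrite step_update by assumption.
  pose proof (Rmult_le_pos _ _ Hy (Rlt_le _ _ eps_pos)).
  destruct in_dec as [Hin|]; [|split; lra].
  pose proof (step_ratio i e Hi Hin) as [Hr0 Hr1]. split; nra.
Qed.

Lemma ys_bounds i :
  (i <= tau)%nat -> forall e, (e < m)%nat -> delta <= ys i e < 1 + eps.
Proof.
  induction i as [|i IH]; intros Hi e He; [rewrite ys_init by exact He; lra|].
  assert (Hi' : (i < tau)%nat) by lia.
  pose proof (IH ltac:(lia) e He) as [Hlo Hhi].
  pose proof (step_growth i e Hi' He ltac:(lra)) as [Hgrow Hfactor].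
  split; [lra|].
  destruct (in_dec Nat.eq_dec e (Ps (S i))) as [Hin|Hout].
  - (* an edge on the augmenting path is shorter than the whole path, i.e. < 1 *)
    assert (HP := Lpath_edges_lt _ _ _ _ _ _ _ (step_path i Hi')).
    assert (Hshort : ys i e < 1).
    { eapply Rle_lt_trans; [apply path_len_ge_edge; [exact Hin|]|apply (step_shortest i Hi')].
      intros e' He'. pose proof (IH ltac:(lia) e' (HP e' He')). lra. }
    nra.
  - rewrite step_update by assumption. destruct in_dec; [contradiction|lra].
Qed.

Lemma load_potential i :
  (i <= tau)%nat -> forall e, (e < m)%nat ->
  ln (1 + eps) * edge_load (xs i) e / c e <= ln (ys i e) - ln delta.
Proof.
  induction i as [|i IH]; intros Hi e He.
  - rewrite xs_init, ys_init by exact He. unfold edge_load; simpl. unfold Rdiv; lra.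
  - assert (Hi' : (i < tau)%nat) by lia.
    specialize (IH ltac:(lia) e He).
    pose proof (ys_bounds i ltac:(lia) e He) as [Hlo _].
    pose proof (cap_pos e He).
    rewrite step_flow, edge_load_app1, step_update by assumption. simpl fst; simpl snd.
    destruct in_dec as [Hin|]; [|rewrite Rplus_0_r; exact IH].
    pose proof (step_ratio i e Hi' Hin) as Hr.
    pose proof (ln_concave_bound eps (cs (S i) / c e) eps_pos ltac:(lra)).
    rewrite ln_mult by nra.
    replace (ln (1 + eps) * (edge_load (xs i) e + cs (S i)) / c e) with
      (ln (1 + eps) * edge_load (xs i) e / c e + cs (S i) / c e * ln (1 + eps))
      by (field; lra).
    lra.
Qed.

Lemma log_potential i :
  (i <= tau)%nat ->
  INR i * ln (1 + eps) + INR m * ln delta <= sum_nat m (fun e => ln (ys i e)).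
Proof.
  induction i as [|i IH]; intros Hi.
  - rewrite (sum_nat_ext _ _ (fun _ => ln delta)), sum_nat_const by
      (intros e He; rewrite ys_init; auto).
    simpl; lra.
  - assert (Hi' : (i < tau)%nat) by lia.
    specialize (IH ltac:(lia)).
    destruct (step_bottleneck i Hi') as [e0 [He0 Hc0]].
    assert (He0m := Lpath_edges_lt _ _ _ _ _ _ _ (step_path i Hi') e0 He0).
    assert (Hgain : sum_nat m (fun e => ln (ys i e)) + ln (1 + eps) <=
                    sum_nat m (fun e => ln (ys (S i) e))).
    { apply (sum_nat_le_gain _ _ _ e0); [|exact He0m|].
      - intros e He. pose proof (ys_bounds i ltac:(lia) e He).
        apply ln_le_mono; [lra|]. apply (step_growth i e Hi' He); lra.
      - (* the bottleneck edge grows by exactly the factor 1+eps *)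
        pose proof (ys_bounds i ltac:(lia) e0 He0m).
        rewrite step_update by assumption. destruct in_dec; [|contradiction].
        rewrite <- Hc0. replace (c e0 / c e0) with 1 by (field; apply Rgt_not_eq, cap_pos, He0m).
        rewrite Rmult_1_r, ln_mult; lra. }
    rewrite S_INR. lra.
Qed.

Lemma flow_support i :
  (i <= tau)%nat ->
  forall pa, In pa (xs i) -> is_Lpath m tl hd s t L (fst pa) /\ 0 <= snd pa.
Proof.
  induction i as [|i IH]; intros Hi pa Hpa; [rewrite xs_init in Hpa; contradiction|].
  assert (Hi' : (i < tau)%nat) by lia.
  rewrite step_flow in Hpa by exact Hi'.
  apply in_app_or in Hpa as [Hpa|[<-|[]]]; [exact (IH ltac:(lia) pa Hpa)|].
  pose proof (step_amount_pos i Hi').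
  split; [exact (step_path i Hi')|simpl; lra].
Qed.

Lemma dual_cost_step i :
  (i < tau)%nat ->
  LP_cost m c (fun e => ys (S i) e - delta) =
  LP_cost m c (fun e => ys i e - delta) + eps * cs (S i) * path_len (ys i) (Ps (S i)).
Proof.
  intros Hi. assert (HP := step_path i Hi).
  unfold LP_cost.
  rewrite <- path_len_scal, <- (sum_nat_on_path m _ _ (Lpath_nodup _ _ _ _ _ _ _ HP)
                                  (Lpath_edges_lt _ _ _ _ _ _ _ HP)), <- sum_nat_plus.
  apply sum_nat_ext. intros e He. rewrite step_update by assumption.
  pose proof (cap_pos e He). destruct in_dec; [field; lra|ring].
Qed.

Context {beta : R}.
Hypothesis beta_opt : LP_opt m tl hd c s t L beta.
Hypothesis beta_pos : 0 < beta.

Definition dual_pot (i : nat) : R :=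
  INR L * delta * beta + LP_cost m c (fun e => ys i e - delta).

(* D_{i+1} = D_i + eps*c_{i+1}*d_i, and weak duality gives beta*d_i <= D_i,
   so D_{i+1} <= D_i*(1 + eps*c_{i+1}/beta) <= D_i*exp(eps*c_{i+1}/beta). *)
Lemma dual_potential_step i :
  (i < tau)%nat -> dual_pot (S i) <= dual_pot i * exp (eps * cs (S i) / beta).
Proof.
  intros Hi. pose proof (step_amount_pos i Hi) as Hcc.
  unfold dual_pot at 1. rewrite dual_cost_step, <- Rplus_assoc by exact Hi. fold (dual_pot i).
  set (D := dual_pot i). set (d := path_len (ys i) (Ps (S i))). set (cc := cs (S i)) in *.
  assert (HD : d * beta <= D).
  { apply (dual_bound m tl hd c s t L); auto; [lra| |].
    - intros e He. apply (ys_bounds i ltac:(lia) e He).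
    - apply (step_shortest i Hi). }
  assert (Hd : d <= D / beta).
  { apply (Rmult_le_reg_r beta); [lra|]. unfold Rdiv. rewrite Rmult_assoc, Rinv_l; lra. }
  assert (Hdpos : 0 <= d).
  { apply path_len_nonneg. intros e He.
    pose proof (ys_bounds i ltac:(lia) e (Lpath_edges_lt _ _ _ _ _ _ _ (step_path i Hi) e He)).
    lra. }
  assert (Hlin : D + eps * cc * d <= D * (1 + eps * cc / beta)).
  { replace (D * (1 + eps * cc / beta)) with (D + eps * cc * (D / beta)) by (field; lra).
    assert (eps * cc * d <= eps * cc * (D / beta)) by (apply Rmult_le_compat_l; nra).
    lra. }
  assert (Hexp : D * (1 + eps * cc / beta) <= D * exp (eps * cc / beta)).
  { apply Rmult_le_compat_l; [nra|apply exp_ineq1_le]. }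
  lra.
Qed.

Lemma dual_potential i :
  (i <= tau)%nat -> dual_pot i <= INR L * delta * beta * exp (eps * flow_value (xs i) / beta).
Proof.
  induction i as [|i IH]; intros Hi.
  - unfold dual_pot, LP_cost. rewrite xs_init. unfold flow_value; simpl.
    rewrite (sum_nat_ext _ _ (fun _ => 0)), sum_nat_const by
      (intros e He; rewrite ys_init by exact He; ring).
    rewrite Rmult_0_r, Rmult_0_r. unfold Rdiv. rewrite Rmult_0_l, exp_0. lra.
  - assert (Hi' : (i < tau)%nat) by lia.
    eapply Rle_trans; [apply (dual_potential_step i Hi')|].
    rewrite step_flow, flow_value_app1 by exact Hi'. simpl snd.
    replace (eps * (flow_value (xs i) + cs (S i)) / beta)
      with (eps * flow_value (xs i) / beta + eps * cs (S i) / beta) by (field; lra).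
    rewrite exp_plus, <- Rmult_assoc.
    apply Rmult_le_compat_r; [left; apply exp_pos|exact (IH ltac:(lia))].
Qed.

Lemma termination_bound :
  (exists a, is_dL m tl hd s t L (ys tau) a /\ 1 <= a) ->
  beta <= INR L * delta * beta * exp (eps * flow_value (xs tau) / beta).
Proof.
  intros [a [[_ Hamin] Ha1]].
  eapply Rle_trans; [|apply (dual_potential tau (le_n tau))]. unfold dual_pot.
  rewrite <- (Rmult_1_l beta) at 1.
  apply (dual_bound m tl hd c s t L); auto; [lra| |].
  - intros e He. apply (ys_bounds tau (le_n tau) e He).
  - intros Q HQ. specialize (Hamin Q HQ). lra.
Qed.

End ApproxRun.

Lemma delta_choice eps L delta :
  0 < eps -> (1 <= L)%nat ->
  delta = (1 + eps) / Rpower ((1 + eps) * INR L) (1 / eps) ->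
  0 < delta < 1 + eps /\ ln ((1 + eps) / delta) = ln ((1 + eps) * INR L) / eps.
Proof.
  intros Heps HL ->. set (K := (1 + eps) * INR L).
  assert (HlnK : 0 < ln K).
  { apply ln_pos_gt1. pose proof (le_INR 1 L HL). unfold K; simpl in *; nra. }
  set (RP := Rpower K (1 / eps)).
  assert (HRP : 1 < RP).
  { unfold RP, Rpower. rewrite <- exp_0 at 1. apply exp_increasing.
    apply Rmult_lt_0_compat; [apply Rdiv_lt_0_compat|]; lra. }
  replace ((1 + eps) / ((1 + eps) / RP)) with RP by (field; lra).
  split; [split|].
  - apply Rdiv_lt_0_compat; lra.
  - apply (Rmult_lt_reg_r RP); [lra|]. unfold Rdiv. rewrite Rmult_assoc, Rinv_l; nra.
  - unfold RP. rewrite ln_Rpower. unfold Rdiv; ring.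
Qed.

(* Claim (i): comparing the potential bound with y_tau < 1+eps gives
   tau*ln(1+eps) <= m*ln((1+eps)/delta). *)
Lemma iteration_count m tau eps delta (y : nat -> R) :
  0 < eps -> 0 < delta -> (forall e, (e < m)%nat -> 0 < y e < 1 + eps) ->
  INR tau * ln (1 + eps) + INR m * ln delta <= sum_nat m (fun e => ln (y e)) ->
  INR tau <= INR m * IZR (Rceil (logb (1 + eps) ((1 + eps) / delta))).
Proof.
  intros Heps Hd Hy Hpot. unfold logb.
  assert (Hl1 : 0 < ln (1 + eps)) by (apply ln_pos_gt1; lra).
  assert (Hsum : sum_nat m (fun e => ln (y e)) <= INR m * ln (1 + eps)).
  { rewrite <- sum_nat_const. apply sum_nat_le. intros e He.
    specialize (Hy e He). apply ln_le_mono; lra. }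
  assert (Htau : INR tau <= INR m * (ln ((1 + eps) / delta) / ln (1 + eps))).
  { apply (Rmult_le_reg_r (ln (1 + eps))); [lra|].
    rewrite ln_div by lra.
    replace (INR m * ((ln (1 + eps) - ln delta) / ln (1 + eps)) * ln (1 + eps))
      with (INR m * ln (1 + eps) - INR m * ln delta) by (field; lra).
    lra. }
  pose proof (Rceil_ge (ln ((1 + eps) / delta) / ln (1 + eps))).
  pose proof (pos_INR m). nra.
Qed.

(* Claim (ii): the load bound with y < 1+eps gives load(e) < c(e) * Lambda,
   where Lambda = log_{1+eps}((1+eps)/delta). *)
Lemma scaled_flow_feasible m tl hd c s t L eps delta (y : nat -> R) (x : flow) :
  0 < eps -> 0 < delta < 1 + eps -> (forall e, (e < m)%nat -> 0 < c e) ->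
  (forall e, (e < m)%nat -> 0 < y e < 1 + eps) ->
  (forall pa, In pa x -> is_Lpath m tl hd s t L (fst pa) /\ 0 <= snd pa) ->
  (forall e, (e < m)%nat -> ln (1 + eps) * edge_load x e / c e <= ln (y e) - ln delta) ->
  feasible_Lflow m tl hd c s t L (scale_flow x (logb (1 + eps) ((1 + eps) / delta))).
Proof.
  intros Heps Hd Hc Hy Hsupp Hload.
  set (Lam := logb (1 + eps) ((1 + eps) / delta)).
  assert (Hl1 : 0 < ln (1 + eps)) by (apply ln_pos_gt1; lra).
  assert (HLam : Lam * ln (1 + eps) = ln (1 + eps) - ln delta).
  { unfold Lam, logb. rewrite ln_div by lra. field; lra. }
  assert (HLampos : 0 < Lam).
  { apply (Rmult_lt_reg_r (ln (1 + eps))); [lra|]. rewrite HLam, Rmult_0_l.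
    pose proof (ln_increasing delta (1 + eps) ltac:(lra) ltac:(lra)). lra. }
  split.
  - intros pa Hpa. apply in_scale_flow in Hpa as [pb [Hpb ->]].
    destruct (Hsupp pb Hpb) as [HP Hnn]. split; [exact HP|simpl].
    unfold Rdiv. apply Rmult_le_pos; [exact Hnn|left; apply Rinv_0_lt_compat; lra].
  - intros e He. rewrite edge_load_scale.
    specialize (Hload e He). pose proof (Hc e He). specialize (Hy e He).
    assert (ln (y e) < ln (1 + eps)) by (apply ln_increasing; lra).
    assert (Hratio : edge_load x e / c e * ln (1 + eps) < Lam * ln (1 + eps)).
    { rewrite HLam. replace (edge_load x e / c e * ln (1 + eps))
        with (ln (1 + eps) * edge_load x e / c e) by (field; lra). lra. }
    apply Rmult_lt_reg_r in Hratio; [|lra].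
    apply (Rmult_le_reg_r Lam); [lra|].
    unfold Rdiv in *. rewrite Rmult_assoc, Rinv_l by lra.
    apply (Rmult_lt_compat_r (c e)) in Hratio; [|lra].
    rewrite Rmult_assoc, Rinv_l in Hratio by lra. lra.
Qed.

(* The approximation ratio: for 0 < eps < 1/3,
   1/(1+3eps) <= (1-eps)/(1+eps) <= (1-eps) ln(1+eps)/eps. *)
Lemma ratio_bound eps :
  0 < eps < 1 / 3 -> / (1 + 3 * eps) <= (1 - eps) * ln (1 + eps) / eps.
Proof.
  intros Heps. pose proof (ln_1_plus_lower eps ltac:(lra)) as Hl1.
  apply Rle_trans with ((1 - eps) / (1 + eps)).
  - apply (Rmult_le_reg_r ((1 + 3 * eps) * (1 + eps))); [nra|].
    replace (/ (1 + 3 * eps) * ((1 + 3 * eps) * (1 + eps))) with (1 + eps) by (field; lra).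
    replace ((1 - eps) / (1 + eps) * ((1 + 3 * eps) * (1 + eps)))
      with ((1 - eps) * (1 + 3 * eps)) by (field; lra).
    nra.
  - replace ((1 - eps) / (1 + eps)) with ((1 - eps) * (eps / (1 + eps)) / eps)
      by (field; lra).
    unfold Rdiv. apply Rmult_le_compat_r; [left; apply Rinv_0_lt_compat; lra|].
    apply Rmult_le_compat_l; [lra|exact Hl1].
Qed.

(* Claim (iii): from beta <= L*delta*beta*exp(eps*f/beta) and the choice of
   delta, eps*f/beta >= (1-eps)/eps * ln((1+eps)L), and dividing f by
   Lambda = ln((1+eps)L)/(eps ln(1+eps)) leaves at least beta/(1+3eps). *)
Lemma scaled_value_bound eps L delta beta f :
  0 < eps < 1 / 3 -> (1 <= L)%nat -> 0 < delta ->
  ln ((1 + eps) / delta) = ln ((1 + eps) * INR L) / eps ->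
  0 <= beta -> 0 <= f ->
  (0 < beta -> beta <= INR L * delta * beta * exp (eps * f / beta)) ->
  beta / (1 + 3 * eps) <= f / logb (1 + eps) ((1 + eps) / delta).
Proof.
  intros Heps HL Hd HlnD Hb Hf Hdual.
  set (lK := ln ((1 + eps) * INR L)). set (l1 := ln (1 + eps)).
  assert (HL1 : 1 <= INR L) by exact (le_INR 1 L HL).
  assert (Hl1 : 0 < l1) by (apply ln_pos_gt1; lra).
  assert (HlK : lK = l1 + ln (INR L)) by (apply ln_mult; lra).
  assert (HlK0 : 0 < lK) by (apply ln_pos_gt1; nra).
  assert (HLam : logb (1 + eps) ((1 + eps) / delta) = lK / (eps * l1)).
  { unfold logb. rewrite HlnD. fold l1 lK. field; lra. }
  rewrite HLam. replace (f / (lK / (eps * l1))) with (f * (eps * l1 / lK)) by (field; lra).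
  destruct Hb as [Hb|<-].
  2: { unfold Rdiv at 1. rewrite Rmult_0_l. apply Rmult_le_pos; [exact Hf|].
       apply Rlt_le, Rdiv_lt_0_compat; nra. }
  assert (Hlnd : ln delta = l1 - lK / eps).
  { rewrite ln_div in HlnD by lra. fold l1 lK in HlnD. lra. }
  (* taking logarithms in 1 <= L*delta*exp(eps*f/beta) *)
  assert (Hlog : 0 <= ln (INR L) + ln delta + eps * f / beta).
  { specialize (Hdual Hb).
    assert (H1 : 1 <= INR L * delta * exp (eps * f / beta)).
    { apply (Rmult_le_reg_r beta); [lra|]. lra. }
    rewrite <- ln_1, <- (ln_exp (eps * f / beta)), <- !ln_mult by
      (try apply exp_pos; nra).
    apply ln_le_mono; lra. }
  assert (Hflow : lK * (1 - eps) * beta / (eps * eps) <= f).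
  { assert (Hfb : lK * (1 - eps) / eps <= eps * f / beta).
    { replace (lK * (1 - eps) / eps) with (lK / eps - lK) by (field; lra). lra. }
    apply (Rmult_le_compat_r (beta / eps)) in Hfb; [|apply Rlt_le, Rdiv_lt_0_compat; lra].
    replace (eps * f / beta * (beta / eps)) with f in Hfb by (field; lra).
    replace (lK * (1 - eps) / eps * (beta / eps)) with (lK * (1 - eps) * beta / (eps * eps))
      in Hfb by (field; lra). exact Hfb. }
  apply Rle_trans with (lK * (1 - eps) * beta / (eps * eps) * (eps * l1 / lK)).
  - replace (lK * (1 - eps) * beta / (eps * eps) * (eps * l1 / lK))
      with (beta * ((1 - eps) * l1 / eps)) by (field; lra).
    unfold Rdiv at 1. apply Rmult_le_compat_l; [lra|]. apply ratio_bound; lra.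
  - apply Rmult_le_compat_r; [apply Rlt_le, Rdiv_lt_0_compat; nra|exact Hflow].
Qed.

Theorem mainTheorem2 :
  forall (m : nat) (tl hd : nat -> nat) (c : nat -> R) (s t L : nat)
         (eps beta : R)
         (ys : nat -> nat -> R) (Ps : nat -> list nat) (cs : nat -> R)
         (xs : nat -> flow) (tau : nat),
    (forall e, (e < m)%nat -> 0 < c e) ->
    (forall e1 e2, (e1 < m)%nat -> (e2 < m)%nat ->
       tl e1 = tl e2 -> hd e1 = hd e2 -> e1 = e2) ->
    s <> t ->
    (1 <= L)%nat ->
    (exists P, is_Lpath m tl hd s t L P) ->
    0 < eps < 1/3 ->
    LP_opt m tl hd c s t L beta ->
    let delta := (1 + eps) / Rpower ((1 + eps) * INR L) (1 / eps) in
    (forall e, (e < m)%nat -> ys O e = delta) ->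
    xs O = nil ->
    (forall i, (i < tau)%nat ->
       (exists a, is_dL m tl hd s t L (ys i) a /\ a < 1) /\
       is_Lpath m tl hd s t L (Ps (S i)) /\
       (forall Q, is_Lpath m tl hd s t L Q ->
          path_len (ys i) (Ps (S i)) <= path_len (ys i) Q) /\
       is_min_cap c (Ps (S i)) (cs (S i)) /\
       xs (S i) = xs i ++ [(Ps (S i), cs (S i))] /\
       (forall e, (e < m)%nat ->
          ys (S i) e = if in_dec Nat.eq_dec e (Ps (S i))
                       then ys i e * (1 + eps * cs (S i) / c e)
                       else ys i e)) ->
    INR tau <= INR m * IZR (Rceil (logb (1 + eps) ((1 + eps) / delta))) /\
    ((exists a, is_dL m tl hd s t L (ys tau) a /\ 1 <= a) ->
       feasible_Lflow m tl hd c s t L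
         (scale_flow (xs tau) (logb (1 + eps) ((1 + eps) / delta))) /\
       beta / (1 + 3 * eps) <=
         flow_value (scale_flow (xs tau) (logb (1 + eps) ((1 + eps) / delta)))).
Proof.
  intros m tl hd c s t L eps beta ys Ps cs xs tau Hc _ _ HL _ Heps Hopt delta Hy0 Hx0 Hrun.
  destruct (delta_choice eps L delta ltac:(lra) HL eq_refl) as [Hdelta HlnD].
  assert (Hy : forall e, (e < m)%nat -> 0 < ys tau e < 1 + eps).
  { intros e He. pose proof (ys_bounds Hc (proj1 Heps) Hdelta Hy0 Hrun tau (le_n tau) e He).
    lra. }
  pose proof (flow_support Hc Hx0 Hrun tau (le_n tau)) as Hsupp.
  split.
  - exact (iteration_count m tau eps delta (ys tau) (proj1 Heps) (proj1 Hdelta) Hy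
             (log_potential Hc (proj1 Heps) Hdelta Hy0 Hrun tau (le_n tau))).
  - intros Hterm. split.
    + exact (scaled_flow_feasible m tl hd c s t L eps delta (ys tau) (xs tau)
               (proj1 Heps) Hdelta Hc Hy Hsupp
               (load_potential Hc (proj1 Heps) Hdelta Hy0 Hx0 Hrun tau (le_n tau))).
    + rewrite flow_value_scale.
      apply (scaled_value_bound eps L delta beta); [exact Heps|exact HL|lra|exact HlnD| | |].
      * exact (LP_opt_nonneg m tl hd c s t L beta Hc Hopt).
      * apply flow_value_nonneg. intros pa Hpa. apply (Hsupp pa Hpa).
      * intros Hb. exact (termination_bound Hc (proj1 Heps) Hdelta Hy0 Hx0 Hrun Hopt Hb Hterm).
Qed.
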